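(* Let $M$ be a tame paving matroid of rank $n$ with set of dependent hyperplanes $\mathcal{L}$, and let $\mathcal{Q}=\{Q_1,\ldots,Q_k\}$ be a nice partition of $\mathcal{L}$. Let $\operatorname{rank}$ denote the rank function of $M(\mathcal{Q})$. Then (i) $\operatorname{rank}(l)=n-1$ for every $l\in\mathcal{L}$; and (ii) if $l_1,l_2\in\mathcal{L}$ lie in different parts of $\mathcal{Q}$, then $\operatorname{rank}(l_1\cup l_2)=n$.
   Context: A matroid of rank $n$ is paving ($n$-paving) if every circuit has size $n$ or $n+1$; a dependent hyperplane is a maximal subset of size at least $n$ all of whose $n$-subsets are circuits; tame means any three distinct dependent hyperplanes have empty intersection. For a partition $\mathcal{Q}$ of $\mathcal{L}$, set $H_i=\bigcup_{l\in Q_i}l$; $M(\mathcal{Q})$ is the matroid on the ground set of $M$ whose circuits are (Type 1) the $(n-1)$-subsets contained in $H_i\cap H_j$ for some $i\ne j$, (Type 2) the $n$-subsets of some $H_i$ containing no Type 1 set, (Type 3) the $(n+1)$-subsets containing no Type 1 or Type 2 set. For $L\subseteq\mathcal{L}$ with $|L|\ge2$, $M^L$ is the $n$-paving matroid on $\bigcup_{l\in L}l$ whose set of dependent hyperplanes is $L$. An $n$-paving matroid $N$ on $E$ is liftable if for every tuple $(\gamma_e)_{e\in E}$ in $\mathbb{C}^n$ spanning a hyperplane $H$ and every $q\notin H$ there exist scalars $z_e$ with $(\gamma_e+z_eq)$ in the circuit variety of $N$ (tuples whose restriction to every dependent set of $N$ is linearly dependent) and not all in a common hyperplane. $\mathcal{Q}$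 is nice if (i) $M^{Q_i}$ is not liftable whenever $|Q_i|\ge2$, and (ii) no $l\notin Q_i$ satisfies $l\subseteq\bigcup_{l'\in Q_i}l'$. *)

From HB Require Import structures.
From mathcomp Require Import all_boot all_order all_algebra complex.
From mathcomp Require Import Rstruct.
Set Implicit Arguments. Unset Strict Implicit. Unset Printing Implicit Defensive.
Import GRing.Theory.

Section Matroids.
Variable E : finType.

Definition circuit_axioms (C : {set {set E}}) : Prop :=
  [/\ set0 \notin C,
      (forall C1 C2, C1 \in C -> C2 \in C -> C1 \subset C2 -> C1 = C2) &
      (forall C1 C2 e, C1 \in C -> C2 \in C -> C1 != C2 -> e \in C1 :&: C2 ->
         exists2 C3, C3 \in C & C3 \subset (C1 :|: C2) :\ e)].

Definition indep (C : {set {set E}}) (X : {set E}) : bool :=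
  [forall Y : {set E}, (Y \in C) ==> ~~ (Y \subset X)].

Definition mrank (C : {set {set E}}) (X : {set E}) : nat :=
  \max_(I : {set E} | (I \subset X) && indep C I) #|I|.

Definition dependent (C : {set {set E}}) (X : {set E}) : bool := ~~ indep C X.

Definition paving (n : nat) (C : {set {set E}}) : Prop :=
  [/\ circuit_axioms C, mrank C setT = n &
      forall Y, Y \in C -> #|Y| = n \/ #|Y| = n.+1].

Definition hyp_candidate (n : nat) (C : {set {set E}}) (X : {set E}) : bool :=
  (n <= #|X|) &&
  [forall Y : {set E}, ((Y \subset X) && (#|Y| == n)) ==> (Y \in C)].

Definition dep_hyps (n : nat) (C : {set {set E}}) : {set {set E}} :=
  [set H : {set E} | maxset (hyp_candidate n C) H].

Definition tame (n : nat) (C : {set {set E}}) : Prop :=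
  forall H1 H2 H3, H1 \in dep_hyps n C -> H2 \in dep_hyps n C ->
    H3 \in dep_hyps n C -> H1 != H2 -> H1 != H3 -> H2 != H3 ->
    H1 :&: H2 :&: H3 = set0.

(* H_i = cover Q_i = union of the l in Q_i *)
Definition type1 (n : nat) (Q : {set {set {set E}}}) (X : {set E}) : bool :=
  (#|X| == n.-1) &&
  [exists Qi in Q, exists Qj in Q, (Qi != Qj) && (X \subset cover Qi :&: cover Qj)].

Definition type2 (n : nat) (Q : {set {set {set E}}}) (X : {set E}) : bool :=
  [&& #|X| == n, [exists Qi in Q, X \subset cover Qi] &
      ~~ [exists Y : {set E}, (Y \subset X) && type1 n Q Y]].

Definition type3 (n : nat) (Q : {set {set {set E}}}) (X : {set E}) : bool :=
  (#|X| == n.+1) &&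
  ~~ [exists Y : {set E}, (Y \subset X) && (type1 n Q Y || type2 n Q Y)].

Definition MQ (n : nat) (Q : {set {set {set E}}}) : {set {set E}} :=
  [set X : {set E} | [|| type1 n Q X, type2 n Q X | type3 n Q X]].

(* ---- M^L: the n-paving matroid on (cover L) with dependent hyperplanes L.
   Its circuits: the n-subsets of some l in L, and the (n+1)-subsets of
   cover L containing no such n-subset. ---- *)
Definition ML (n : nat) (L : {set {set E}}) : {set {set E}} :=
  [set X : {set E} | (X \subset cover L) &&
     (((#|X| == n) && [exists l in L, X \subset l]) ||
      ((#|X| == n.+1) &&
        ~~ [exists Y : {set E},
              [&& Y \subset X, #|Y| == n & [exists l in L, Y \subset l]]]))].

Definition CC := complex Rdefinitions.R.

Definition vecs (n : nat) (v : E -> 'rV[CC]_n) (X : {set E}) : seq 'rV[CC]_n :=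
  [seq v e | e <- enum X].

Definition in_circuit_variety (n : nat) (S : {set E}) (CN : {set {set E}})
  (v : E -> 'rV[CC]_n) : Prop :=
  forall D : {set E}, D \subset S -> dependent CN D -> ~~ free (vecs v D).

Definition liftable (n : nat) (S : {set E}) (CN : {set {set E}}) : Prop :=
  forall (gamma : E -> 'rV[CC]_n) (q : 'rV[CC]_n),
    \dim <<vecs gamma S>>%VS = n.-1 ->
    q \notin <<vecs gamma S>>%VS ->
    exists z : E -> CC,
      in_circuit_variety S CN (fun e => (gamma e + z e *: q)%R) /\
      \dim <<vecs (fun e => (gamma e + z e *: q)%R) S>>%VS = n.

Definition nice (n : nat) (C : {set {set E}}) (Q : {set {set {set E}}}) : Prop :=
  (forall Qi, Qi \in Q -> 2 <= #|Qi| -> ~ liftable n (cover Qi) (ML n Qi)) /\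
  (forall Qi l, Qi \in Q -> l \in dep_hyps n C -> l \notin Qi ->
     ~~ (l \subset cover Qi)).

End Matroids.

From mathcomp Require Import all_boot all_order all_algebra.
From mathcomp Require Import zify.
Set Implicit Arguments. Unset Strict Implicit. Unset Printing Implicit Defensive.

(* Two distinct dependent hyperplanes l, l' meet in fewer than n-1 points: if S is an
   (n-1)-subset of l :&: l', circuit elimination at points of S, by induction on
   #|Y :\: S|, makes every n-subset Y of l :|: l' a circuit, against the maximality
   of l.  With tameness, a point then lies in the unions H_i of at most two blocks,
   and of at most one when n <= 2.  Hence every l in Q_i contains an (n-1)-set X
   lying in no H_j with j <> i (if a point of l is shared with some H_j, niceness (ii)
   yields a second point of l outside H_j); X is independent in M(Q), and so is X
   plus a point of l_2 outside H_i.  Conversely, n-subsets of an H_i and all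
   (n+1)-sets are dependent in M(Q). *)

Section Sets.
Variable T : finType.

Lemma exists_card_between (D A : {set T}) k :
  D \subset A -> #|D| <= k <= #|A| ->
  exists B : {set T}, [/\ D \subset B, B \subset A & #|B| = k].
Proof.
move=> DA; elim: k => [|k IH] /andP[Dk kA].
  by move: Dk; rewrite leqn0 cards_eq0 => /eqP->; exists set0; rewrite !sub0set cards0.
have [Dk'|kD] := leqP #|D| k; last first.
  by exists D; split=> //; apply/eqP; rewrite eqn_leq Dk kD.
have [|B [DB BA cB]] := IH; first by rewrite Dk' ltnW.
have /properP[_ [x xA xB]] : B \proper A by rewrite properEcard BA cB kA.
exists (x |: B); split; first exact: subset_trans DB (subsetUr _ _).
  by rewrite subUset sub1set xA.
by rewrite cardsU1 xB cB.
Qed.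

Lemma card_setD_gt0 (S Y : {set T}) :
  #|Y| <= #|S|.+1 -> 1 < #|Y :\: S| -> 0 < #|S :\: Y|.
Proof. by move=> YS YS2; have := cardsID S Y; have := cardsID Y S; rewrite setIC; lia. Qed.

End Sets.

Section Rank.
Variables (T : finType) (K : {set {set T}}).

Lemma dependentP (X : {set T}) :
  reflect (exists2 Y, Y \in K & Y \subset X) (dependent K X).
Proof.
rewrite /dependent /indep negb_forall; apply: (iffP existsP) => [[Y]|[Y YK YX]].
  by rewrite negb_imply negbK => /andP[]; exists Y.
by exists Y; rewrite YK YX.
Qed.

Lemma indep_leq_mrank (X I : {set T}) : I \subset X -> indep K I -> #|I| <= mrank K X.
Proof. by move=> IX indI; apply: leq_bigmax_cond; rewrite IX indI. Qed.

Lemma mrank_leq (X : {set T}) k :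
  (forall Z : {set T}, Z \subset X -> #|Z| = k.+1 -> dependent K Z) -> mrank K X <= k.
Proof.
move=> depX; apply/bigmax_leqP => I /andP[IX indI]; rewrite leqNgt; apply/negP => kI.
have [|Z [_ ZI cZ]] := exists_card_between (sub0set I) (_ : #|set0| <= k.+1 <= #|I|).
  by rewrite cards0.
have /dependentP[Y YK YZ] := depX Z (subset_trans ZI IX) cZ.
by move/forallP/(_ Y): indI; rewrite YK (subset_trans YZ ZI).
Qed.

End Rank.

Section DependentHyperplanes.
Variables (T : finType) (n : nat) (C : {set {set T}}).
Hypothesis C_circuits : circuit_axioms C.
Hypothesis C_card : forall Y, Y \in C -> n <= #|Y|.

Lemma circuit_exchange (Y : {set T}) (e y1 y2 : T) :
  #|Y| = n -> e \notin Y -> y1 \in Y -> y2 \in Y -> y1 != y2 ->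
  e |: (Y :\ y1) \in C -> e |: (Y :\ y2) \in C -> Y \in C.
Proof.
move=> cY eY y1Y y2Y y12 C1 C2; case: C_circuits => _ _ elim.
have y2e : y2 != e by apply: contraNneq eY => <-.
have C12 : e |: (Y :\ y1) != e |: (Y :\ y2).
  apply/negP => /eqP/setP/(_ y2).
  by rewrite !inE (negbTE y2e) y2Y eqxx andbT eq_sym y12.
have eC12 : e \in (e |: (Y :\ y1)) :&: (e |: (Y :\ y2)) by rewrite !inE eqxx.
have [C3 C3C C3sub] := elim _ _ e C1 C2 C12 eC12.
have C3Y : C3 \subset Y.
  apply: subset_trans C3sub _; apply/subsetP => x.
  by rewrite !inE => /andP[/negbTE-> /=] /orP[] /andP[].
have /eqP <- // : C3 == Y by rewrite eqEcard C3Y cY C_card.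
Qed.

Lemma dep_hyp_circuit (l Y : {set T}) :
  l \in dep_hyps n C -> Y \subset l -> #|Y| = n -> Y \in C.
Proof.
rewrite inE => /maxsetP[/andP[_ /forallP/(_ Y) lC] _] Yl cY.
by rewrite Yl cY eqxx in lC.
Qed.

Lemma dep_hyp_card (l : {set T}) : l \in dep_hyps n C -> n <= #|l|.
Proof. by rewrite inE => /maxsetP[/andP[]]. Qed.

Lemma dep_hyp_gt0 (l : {set T}) : l \in dep_hyps n C -> 0 < n.
Proof.
move=> hl; rewrite lt0n; apply/negP => /eqP n0; case: C_circuits => C0 _ _.
by rewrite (dep_hyp_circuit hl (sub0set l)) ?cards0 in C0.
Qed.

Lemma dep_hyps_setU_circuit (l l' S Y : {set T}) :
  l \in dep_hyps n C -> l' \in dep_hyps n C -> S \subset l :&: l' -> #|S| = n.-1 ->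
  Y \subset l :|: l' -> #|Y| = n -> Y \in C.
Proof.
rewrite subsetI => hl hl' /andP[Sl Sl'] cS.
elim: {Y}_.+1 {-2}Y (ltnSn #|Y :\: S|) => // k IH Y YS YU cY.
have [Yl|/subsetPn[a aY al]] := boolP (Y \subset l); first exact: dep_hyp_circuit hl Yl cY.
have [Yl'|/subsetPn[b bY bl']] := boolP (Y \subset l'); first exact: dep_hyp_circuit hl' Yl' cY.
have aYS : a \in Y :\: S by rewrite inE aY andbT; apply: contra al; apply: subsetP.
have bYS : b \in Y :\: S by rewrite inE bY andbT; apply: contra bl'; apply: subsetP.
have ab : a != b.
  by apply: contraNneq bl' => <-; move: (subsetP YU a aY); rewrite inE (negbTE al).
have [e eS eY] : exists2 e, e \in S & e \notin Y.
  have : #|[set a; b]| <= #|Y :\: S| by rewrite subset_leq_card // subUset !sub1set aYS.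
  rewrite cards2 ab => /(card_setD_gt0 (_ : #|Y| <= #|S|.+1))/card_gt0P[|e].
    by rewrite cS cY leqSpred.
  by rewrite inE => /andP[]; exists e.
have exch y : y \in Y :\: S -> e |: (Y :\ y) \in C.
  move=> yYS; move: (yYS); rewrite inE => /andP[_ yY]; apply: IH.
  - have -> : (e |: (Y :\ y)) :\: S = (Y :\: S) :\ y.
      apply/setP => x; rewrite !inE; case: (x =P e) => [->|_]; first by rewrite eS andbF.
      by rewrite andbCA.
    by move: YS; rewrite (cardsD1 y (Y :\: S)) yYS.
  - rewrite subUset sub1set inE (subsetP Sl) //=.
    exact: subset_trans (subD1set Y y) YU.
  - rewrite (cardsD1 y Y) yY in cY.
    by rewrite cardsU1 !inE (negbTE eY) andbF /= cY.
exact: circuit_exchange cY eY aY bY ab (exch a aYS) (exch b bYS).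
Qed.

Lemma dep_hyps_meet (l l' : {set T}) :
  l \in dep_hyps n C -> l' \in dep_hyps n C -> l != l' -> #|l :&: l'| < n.-1.
Proof.
move=> hl hl'; apply: contraNT; rewrite -leqNgt => big; apply/eqP.
have [|S [_ Sll' cS]] := exists_card_between (sub0set (l :&: l')) (_ : #|set0| <= n.-1 <= _).
  by rewrite cards0.
have candU : hyp_candidate n C (l :|: l').
  rewrite /hyp_candidate (leq_trans (dep_hyp_card hl)) ?subset_leq_card ?subsetUl //=.
  apply/forallP => Y; apply/implyP => /andP[YU /eqP cY].
  exact: dep_hyps_setU_circuit hl hl' Sll' cS YU cY.
move: hl hl'; rewrite !inE => /maxsetP[_ maxl] /maxsetP[_ maxl'].
by rewrite -[LHS](maxl _ candU (subsetUl _ _)) (maxl' _ candU (subsetUr _ _)).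
Qed.

End DependentHyperplanes.

Section MQCircuits.
Variables (T : finType) (n : nat) (Q : {set {set {set T}}}).

Lemma MQ_dependent_card (Z : {set T}) : #|Z| = n.+1 -> dependent (MQ n Q) Z.
Proof.
move=> cZ; apply/dependentP.
have [/existsP[Y /andP[YZ Y12]]|noY] :=
  boolP [exists Y : {set T}, (Y \subset Z) && (type1 n Q Y || type2 n Q Y)].
  by exists Y; rewrite // inE orbA Y12.
by exists Z; rewrite // inE /type3 cZ eqxx noY !orbT.
Qed.

Lemma MQ_dependent_cover (Qi : {set {set T}}) (Z : {set T}) :
  Qi \in Q -> Z \subset cover Qi -> #|Z| = n -> dependent (MQ n Q) Z.
Proof.
move=> QiQ ZQi cZ; apply/dependentP.
have [/existsP[Y /andP[YZ Y1]]|noY] :=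
  boolP [exists Y : {set T}, (Y \subset Z) && type1 n Q Y].
  by exists Y; rewrite // inE Y1.
exists Z; rewrite // inE /type2 cZ eqxx noY andbT /=.
by apply/or3P/Or32/existsP; exists Qi; rewrite QiQ.
Qed.

Lemma mrank_MQ_leq (X : {set T}) : mrank (MQ n Q) X <= n.
Proof. by apply: mrank_leq => Z _; apply: MQ_dependent_card. Qed.

Lemma mrank_MQ_cover_leq (Qi : {set {set T}}) (X : {set T}) :
  0 < n -> Qi \in Q -> X \subset cover Qi -> mrank (MQ n Q) X <= n.-1.
Proof.
move=> n0 QiQ XQi; apply: mrank_leq => Z ZX; rewrite prednK // => cZ.
exact: MQ_dependent_cover QiQ (subset_trans ZX XQi) cZ.
Qed.

Definition private_to (Qi : {set {set T}}) (X : {set T}) : Prop :=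
  forall Qb : {set {set T}}, Qb \in Q -> Qb != Qi -> ~~ (X \subset cover Qb).

Lemma private_indep (Qi : {set {set T}}) (X : {set T}) :
  0 < n -> #|X| = n.-1 -> private_to Qi X -> indep (MQ n Q) X.
Proof.
move=> n0 cX privX; apply/forallP => Y; apply/implyP; rewrite inE.
case/or3P => [/andP[/eqP cY]|/and3P[/eqP cY _ _]|/andP[/eqP cY _]]; last 2 first.
- by apply/negP => /subset_leq_card; rewrite cY cX; lia.
- by apply/negP => /subset_leq_card; rewrite cY cX; lia.
case/existsP => Qa /andP[QaQ /existsP[Qb /and3P[QbQ ab]]]; rewrite subsetI => /andP[YQa YQb].
apply/negP => YX; have eYX : Y = X by apply/eqP; rewrite eqEcard YX cY cX /=.
rewrite {}eYX in YQa YQb; have [ai|] := eqVneq Qa Qi; last by move/privX/negP; apply.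
by move: ab; rewrite ai eq_sym => /(privX _ QbQ)/negP; apply.
Qed.

End MQCircuits.

Section NicePartition.
Variables (T : finType) (n : nat) (C : {set {set T}}) (Q : {set {set {set T}}}).
Hypothesis C_circuits : circuit_axioms C.
Hypothesis C_card : forall Y, Y \in C -> n <= #|Y|.
Hypothesis C_tame : tame n C.
Hypothesis Q_partition : partition Q (dep_hyps n C).
Hypothesis Q_nice : forall Qi l, Qi \in Q -> l \in dep_hyps n C -> l \notin Qi ->
  ~~ (l \subset cover Qi).

Lemma part_dep_hyp (Qi : {set {set T}}) (l : {set T}) :
  Qi \in Q -> l \in Qi -> l \in dep_hyps n C.
Proof.
case/and3P: Q_partition => /eqP <- _ _ QiQ lQi.
exact: subsetP (bigcup_sup Qi QiQ) l lQi.
Qed.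

Lemma parts_neq (Qa Qb : {set {set T}}) (la lb : {set T}) :
  Qa \in Q -> Qb \in Q -> Qa != Qb -> la \in Qa -> lb \in Qb -> la != lb.
Proof.
case/and3P: Q_partition => _ /trivIsetP disjQ _ QaQ QbQ ab laQa.
by apply: contraTneq => <-; rewrite (disjointFr (disjQ _ _ QaQ QbQ ab) laQa).
Qed.

Lemma notin_other_part (Qa Qb : {set {set T}}) (l : {set T}) :
  Qa \in Q -> Qb \in Q -> Qa != Qb -> l \in Qb -> l \notin Qa.
Proof.
by move=> QaQ QbQ ab lQb; apply/negP => /(parts_neq QaQ QbQ ab)/(_ lQb); rewrite eqxx.
Qed.

Lemma three_covers_disjoint (Qa Qb Qc : {set {set T}}) (x : T) :
  Qa \in Q -> Qb \in Q -> Qc \in Q -> Qa != Qb -> Qa != Qc -> Qb != Qc ->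
  x \in cover Qa -> x \in cover Qb -> x \in cover Qc -> False.
Proof.
move=> QaQ QbQ QcQ ab ac bc.
move=> /bigcupP[la laQa xla] /bigcupP[lb lbQb xlb] /bigcupP[lc lcQc xlc].
have := C_tame (part_dep_hyp QaQ laQa) (part_dep_hyp QbQ lbQb) (part_dep_hyp QcQ lcQc)
  (parts_neq QaQ QbQ ab laQa lbQb) (parts_neq QaQ QcQ ac laQa lcQc)
  (parts_neq QbQ QcQ bc lbQb lcQc).
by move/setP/(_ x); rewrite !inE xla xlb xlc.
Qed.

Lemma two_covers_disjoint (Qa Qb : {set {set T}}) (x : T) :
  n <= 2 -> Qa \in Q -> Qb \in Q -> Qa != Qb ->
  x \in cover Qa -> x \in cover Qb -> False.
Proof.
move=> n2 QaQ QbQ ab /bigcupP[la laQa xla] /bigcupP[lb lbQb xlb].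
have := dep_hyps_meet C_circuits C_card (part_dep_hyp QaQ laQa) (part_dep_hyp QbQ lbQb)
  (parts_neq QaQ QbQ ab laQa lbQb).
have : 0 < #|la :&: lb| by apply/card_gt0P; exists x; rewrite inE xla xlb.
by move/leq_ltn_trans/[apply]; rewrite ltn_predRL ltnNge n2.
Qed.

Lemma exists_private_subset (Qi : {set {set T}}) (l : {set T}) :
  1 < n -> Qi \in Q -> l \in Qi ->
  exists X : {set T}, [/\ X \subset l, #|X| = n.-1 & private_to Q Qi X].
Proof.
move=> n1 QiQ lQi; have dl := part_dep_hyp QiQ lQi.
have l_cover : {subset l <= cover Qi} := subsetP (bigcup_sup l lQi).
suff [D [Dl cD privD]] : exists D : {set T},
    [/\ D \subset l, #|D| <= n.-1 & private_to Q Qi D].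
  have [|X [DX Xl cX]] := exists_card_between Dl (_ : #|D| <= n.-1 <= #|l|).
    by rewrite cD (leq_trans (leq_pred n) (dep_hyp_card dl)).
  exists X; split=> // Qb QbQ bi; apply: contra (privD Qb QbQ bi).
  exact: subset_trans DX.
have /card_gt0P[x1 x1l] : 0 < #|l| := leq_trans (ltnW n1) (dep_hyp_card dl).
have [/existsP[Qb /and3P[QbQ bi x1b]]|none] :=
  boolP [exists Qb in Q, (Qb != Qi) && (x1 \in cover Qb)]; last first.
  exists [set x1]; rewrite sub1set x1l cards1; split=> //; first by rewrite ltn_predRL.
  move=> Qb QbQ bi; apply: contra none; rewrite sub1set => x1b.
  by apply/existsP; exists Qb; rewrite QbQ bi x1b.
have n3 : 2 < n.
  by rewrite ltnNge; apply/negP => n2; apply: (two_covers_disjoint n2 QbQ QiQ bi x1b (l_cover x1 x1l)).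
have /subsetPn[x2 x2l x2b] := Q_nice QbQ dl (notin_other_part QbQ QiQ bi lQi).
exists [set x1; x2]; split.
- by rewrite subUset !sub1set x1l x2l.
- by rewrite cards2 ltn_predRL (leq_trans _ n3) // !ltnS leq_b1.
move=> Qc QcQ ci; rewrite subUset !sub1set; apply/negP => /andP[x1c x2c].
have bc : Qb != Qc by apply: contraNneq x2b => ->.
by apply: (three_covers_disjoint QiQ QbQ QcQ _ _ bc (l_cover x1 x1l) x1b x1c); rewrite eq_sym.
Qed.

Lemma private_setU1_indep (Qi : {set {set T}}) (X : {set T}) (y : T) :
  0 < n -> Qi \in Q -> X \subset cover Qi -> #|X| = n.-1 -> private_to Q Qi X ->
  y \notin cover Qi -> indep (MQ n Q) (y |: X).
Proof.
move=> n0 QiQ XQi cX privX yQi.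
have yX : y \notin X by apply: contra yQi; apply: subsetP.
have cyX : #|y |: X| = n by rewrite cardsU1 yX cX add1n prednK.
apply/forallP => Y; apply/implyP => YMQ; apply/negP => YyX.
have [yY|yY] := boolP (y \in Y); last first.
  have YX : Y \subset X.
    apply/subsetP => x xY; move: (subsetP YyX x xY); rewrite !inE.
    by case: (x =P y) => [exy|//]; rewrite -exy xY in yY.
  by move/forallP/(_ Y): (private_indep n0 cX privX); rewrite YMQ YX.
move: YMQ; rewrite inE => /or3P[|/and3P[/eqP cY /existsP[Qc /andP[QcQ YQc]] _]|/andP[/eqP cY _]].
- case/andP => /eqP cY /existsP[Qa /andP[QaQ /existsP[Qb /and3P[QbQ ab]]]].
  rewrite subsetI => /andP[/subsetP YQa /subsetP YQb].
  have ai : Qa != Qi by apply: contraNneq yQi => <-; apply: YQa.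
  have bi : Qb != Qi by apply: contraNneq yQi => <-; apply: YQb.
  have [n2|n3] := leqP n 2; first exact: two_covers_disjoint n2 QaQ QbQ ab (YQa y yY) (YQb y yY).
  have : 1 < #|Y| by rewrite cY ltn_predRL.
  rewrite (cardsD1 y) yY add1n ltnS => /card_gt0P[x].
  rewrite !inE => /andP[xy xY].
  have xX : x \in X by move: (subsetP YyX x xY); rewrite !inE (negbTE xy).
  exact: three_covers_disjoint QaQ QbQ QiQ ab ai bi (YQa x xY) (YQb x xY) (subsetP XQi x xX).
- have eY : Y = y |: X by apply/eqP; rewrite eqEcard YyX cY cyX /=.
  have [ci|ci] := eqVneq Qc Qi; first by move: yQi; rewrite -ci (subsetP YQc) // eY setU11.
  by move: (privX Qc QcQ ci); rewrite (subset_trans _ YQc) // eY subsetUr.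
- by move: (subset_leq_card YyX); rewrite cY cyX ltnn.
Qed.

Lemma mrank_MQ_dep_hyp (l : {set T}) : l \in dep_hyps n C -> mrank (MQ n Q) l = n.-1.
Proof.
move=> dl; have n0 := dep_hyp_gt0 C_circuits dl.
have lQ : l \in cover Q by case/and3P: Q_partition => /eqP->.
have lpl : l \in pblock Q l by rewrite mem_pblock.
have plQ := pblock_mem lQ.
apply/eqP; rewrite eqn_leq (mrank_MQ_cover_leq n0 plQ (bigcup_sup l lpl)) /=.
have [n1|n1] := ltnP 1 n; last by move: n1; rewrite -subn_eq0 subn1 => /eqP->.
have [X [Xl cX privX]] := exists_private_subset n1 plQ lpl.
by rewrite -cX indep_leq_mrank // (private_indep (ltnW n1) cX privX).
Qed.

Lemma mrank_MQ_setU_parts (Qi Qj : {set {set T}}) (l1 l2 : {set T}) :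
  Qi \in Q -> Qj \in Q -> Qi != Qj -> l1 \in Qi -> l2 \in Qj ->
  mrank (MQ n Q) (l1 :|: l2) = n.
Proof.
move=> QiQ QjQ ij l1Qi l2Qj.
have d1 := part_dep_hyp QiQ l1Qi; have d2 := part_dep_hyp QjQ l2Qj.
have n1 : 1 < n.
  have meet := dep_hyps_meet C_circuits C_card d1 d2 (parts_neq QiQ QjQ ij l1Qi l2Qj).
  by rewrite -ltn_predRL (leq_ltn_trans (leq0n _) meet).
apply/eqP; rewrite eqn_leq mrank_MQ_leq /=.
have [X [Xl cX privX]] := exists_private_subset n1 QiQ l1Qi.
have /subsetPn[y yl2 yQi] := Q_nice QiQ d2 (notin_other_part QiQ QjQ ij l2Qj).
have XQi : X \subset cover Qi := subset_trans Xl (bigcup_sup l1 l1Qi).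
have yX : y \notin X by apply: contra yQi; apply: subsetP.
have cyX : #|y |: X| = n by rewrite cardsU1 yX cX add1n prednK // ltnW.
rewrite -{1}cyX; apply: indep_leq_mrank; last exact: private_setU1_indep (ltnW n1) QiQ XQi cX privX yQi.
by rewrite subUset sub1set inE yl2 orbT (subset_trans Xl (subsetUl _ _)).
Qed.

End NicePartition.

Theorem lemma8p2 (E : finType) (n : nat) (C : {set {set E}})
  (Q : {set {set {set E}}}) :
  paving n C -> tame n C -> partition Q (dep_hyps n C) -> nice n C Q ->
  (forall l, l \in dep_hyps n C -> mrank (MQ n Q) l = n.-1) /\
  (forall Qi Qj l1 l2, Qi \in Q -> Qj \in Q -> Qi != Qj ->
     l1 \in Qi -> l2 \in Qj -> mrank (MQ n Q) (l1 :|: l2) = n).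
Proof.
case=> circ _ card_nSn tm part [_ nice].
have cardC Y : Y \in C -> n <= #|Y| by case/card_nSn => ->.
split=> [l|Qi Qj l1 l2].
- exact: mrank_MQ_dep_hyp circ cardC tm part nice l.
- exact: mrank_MQ_setU_parts circ cardC tm part nice Qi Qj l1 l2.
Qed.
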